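(* Let $m\ge3$, $\rho=\frac12+\frac1m$, $0<\delta\le\frac\pi{m+2}$. For $x\ge0$ put $Q(x)=x^m+P(x)+\lambda$, $g=\frac{Q'(x)}{8Q(x)^{3/2}}$, $h=\frac{Q'(x)}{4Q(x)}$ and $$\begin{pmatrix}s_{11}&s_{12}\\ s_{21}&s_{22}\end{pmatrix}=\frac1{1+g^2}\begin{pmatrix}hg-g'g&-hg^2+g'\\ -hg^2-g'&-hg-g'g\end{pmatrix},$$ where $'$ denotes $d/dx$ and $Q^{3/2}$ uses the principal branch. Then for $j,k\in\{1,2\}$, $$\int_0^\infty|s_{jk}(x,\lambda)|\,dx=O\bigl(|\lambda|^{-\rho}\bigr)$$ as $\lambda\to\infty$ in $|\arg\lambda|\le\pi-\delta$, uniformly for $a$ in any compact subset of $\mathbb C^m$.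
   Context: $a=(a_1,\dots,a_m)\in\mathbb C^m$ and $P(x)=a_1x^{m-1}+\dots+a_m$. *)

From Stdlib Require Import Reals List.
Import ListNotations.
Open Scope R_scope.

Definition Cx := (R * R)%type.
Definition RtoC (r : R) : Cx := (r, 0).
Definition Cadd (z w : Cx) : Cx := (fst z + fst w, snd z + snd w).
Definition Copp (z : Cx) : Cx := (- fst z, - snd z).
Definition Csub (z w : Cx) : Cx := Cadd z (Copp w).
Definition Cmul (z w : Cx) : Cx :=
  (fst z * fst w - snd z * snd w, fst z * snd w + snd z * fst w).
Definition Cnorm (z : Cx) : R := sqrt (fst z ^ 2 + snd z ^ 2).
Definition Cinv (z : Cx) : Cx :=
  let n2 := fst z ^ 2 + snd z ^ 2 in (fst z / n2, - snd z / n2).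
Definition Cdiv (z w : Cx) : Cx := Cmul z (Cinv w).

(* principal argument, with values in (-PI, PI] (0 at z = 0) *)
Definition Carg (z : Cx) : R :=
  let x := fst z in let y := snd z in
  if Rlt_dec 0 x then atan (y / x)
  else if Rlt_dec x 0 then
    (if Rle_dec 0 y then atan (y / x) + PI else atan (y / x) - PI)
  else if Rlt_dec 0 y then PI / 2
  else if Rlt_dec y 0 then - (PI / 2) else 0.

(* principal branch of z^(3/2) = |z|^(3/2) e^{i (3/2) arg z}; 0^(3/2) = 0 *)
Definition Cpow32 (z : Cx) : Cx :=
  if Req_EM_T (Cnorm z) 0 then (0, 0)
  else let r := Rpower (Cnorm z) (3 / 2) in
       let t := 3 / 2 * Carg z in (r * cos t, r * sin t).

(* P(x) = a_1 x^(m-1) + ... + a_m  (only a 1, ..., a m are used) *)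
Definition polyP (m : nat) (a : nat -> Cx) (x : R) : Cx :=
  fold_right (fun i acc => Cadd (Cmul (a (S i)) (RtoC (x ^ (m - S i)))) acc)
             (0, 0) (seq 0 m).

Definition Qfun (m : nat) (a : nat -> Cx) (lam : Cx) (x : R) : Cx :=
  Cadd (RtoC (x ^ m)) (Cadd (polyP m a x) lam).

Definition dQfun (m : nat) (a : nat -> Cx) (x : R) : Cx :=
  Cadd (RtoC (INR m * x ^ (m - 1)))
       (fold_right (fun i acc =>
           Cadd (Cmul (a (S i)) (RtoC (INR (m - S i) * x ^ (m - S i - 1)))) acc)
        (0, 0) (seq 0 m)).

Definition gfun (m : nat) (a : nat -> Cx) (lam : Cx) (x : R) : Cx :=
  Cdiv (dQfun m a x) (Cmul (RtoC 8) (Cpow32 (Qfun m a lam x))).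
Definition hfun (m : nat) (a : nat -> Cx) (lam : Cx) (x : R) : Cx :=
  Cdiv (dQfun m a x) (Cmul (RtoC 4) (Qfun m a lam x)).

Definition has_Cderiv (f : R -> Cx) (x : R) (d : Cx) : Prop :=
  derivable_pt_lim (fun t => fst (f t)) x (fst d) /\
  derivable_pt_lim (fun t => snd (f t)) x (snd d).

(* entries s_jk, given dg = g' *)
Definition sfun (m : nat) (a : nat -> Cx) (lam : Cx) (dg : R -> Cx)
    (j k : nat) (x : R) : Cx :=
  let g := gfun m a lam x in
  let h := hfun m a lam x in
  let gp := dg x in
  let den := Cadd (RtoC 1) (Cmul g g) in
  match j, k with
  | 1%nat, 1%nat => Cdiv (Csub (Cmul h g) (Cmul gp g)) den
  | 1%nat, 2%nat => Cdiv (Cadd (Copp (Cmul h (Cmul g g))) gp) den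
  | 2%nat, 1%nat => Cdiv (Csub (Copp (Cmul h (Cmul g g))) gp) den
  | _, _ => Cdiv (Csub (Copp (Cmul h g)) (Cmul gp g)) den
  end.

From Stdlib Require Import Reals List Lra Lia Psatz Rtrigo_facts.
Open Scope R_scope.

(* In the sector [|arg lam| <= PI - delta] the point [x^m + lam] stays in a closed
   subsector of the plane slit along (-oo, 0], with [|x^m + lam| >= k (x^m + |lam|)].
   For [|lam|] large the perturbation [P(x)] is absorbed, so [Q(x)] avoids (-oo, 0],
   [Q^(3/2) = Q sqrt Q] is smooth and [|Q(x)| >~ x^m + |lam|].  With [X = |lam|^(1/m)]
   and [nu = max x X] this yields [|Q'|/|Q| <~ 1/nu], [|Q''|/|Q| <~ 1/nu^2] and
   [sqrt |Q| >~ sqrt |lam|]; hence [|g| <= 1/2], [|1 + g^2| >= 3/4] and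
   [|s_jk(x)| <~ |lam|^(-1/2) / (X^2 + x^2)], whose integral over [0, oo) is
   [|lam|^(-1/2) PI / (2 X) = O(|lam|^(-1/2 - 1/m))]. *)

Lemma Cx_eq (z w : Cx) : fst z = fst w -> snd z = snd w -> z = w.
Proof. destruct z, w; simpl; intros; subst; reflexivity. Qed.

Lemma Cnorm_ge0 (z : Cx) : 0 <= Cnorm z.
Proof. apply sqrt_pos. Qed.

Lemma Cnorm_sq (z : Cx) : Cnorm z * Cnorm z = fst z ^ 2 + snd z ^ 2.
Proof. unfold Cnorm. apply sqrt_sqrt. nra. Qed.

Lemma Cnorm_fst (z : Cx) : Rabs (fst z) <= Cnorm z.
Proof.
  pose proof (Cnorm_sq z). pose proof (Cnorm_ge0 z).
  unfold Rabs; destruct (Rcase_abs (fst z)); nra.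
Qed.

Lemma Cnorm_unique (z : Cx) (r : R) :
  0 <= r -> r * r = fst z ^ 2 + snd z ^ 2 -> Cnorm z = r.
Proof. intros Hr E. unfold Cnorm. rewrite <- E. apply sqrt_square. lra. Qed.

Lemma Cnorm_0 : Cnorm (0, 0) = 0.
Proof. apply Cnorm_unique; simpl; lra. Qed.

Lemma Cnorm_mul (z w : Cx) : Cnorm (Cmul z w) = Cnorm z * Cnorm w.
Proof.
  apply Cnorm_unique.
  - apply Rmult_le_pos; apply Cnorm_ge0.
  - replace (Cnorm z * Cnorm w * (Cnorm z * Cnorm w))
      with ((Cnorm z * Cnorm z) * (Cnorm w * Cnorm w)) by ring.
    rewrite !Cnorm_sq. unfold Cmul; simpl. ring.
Qed.

Lemma Cnorm_RtoC (r : R) : Cnorm (RtoC r) = Rabs r.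
Proof.
  apply Cnorm_unique; [apply Rabs_pos |]. unfold RtoC; simpl.
  rewrite <- Rabs_mult, Rabs_pos_eq by nra. ring.
Qed.

Lemma Cnorm_opp (z : Cx) : Cnorm (Copp z) = Cnorm z.
Proof.
  apply Cnorm_unique; [apply Cnorm_ge0 |]. rewrite Cnorm_sq. unfold Copp; simpl. ring.
Qed.

Lemma Cnorm_add (z w : Cx) : Cnorm (Cadd z w) <= Cnorm z + Cnorm w.
Proof.
  pose proof (Cnorm_sq z) as Ez. pose proof (Cnorm_sq w) as Ew.
  pose proof (Cnorm_sq (Cadd z w)) as Ezw.
  pose proof (Cnorm_ge0 z). pose proof (Cnorm_ge0 w). pose proof (Cnorm_ge0 (Cadd z w)).
  destruct z as [x1 y1], w as [x2 y2]; unfold Cadd in *; simpl in *.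
  set (a := Cnorm (x1, y1)) in *. set (b := Cnorm (x2, y2)) in *.
  assert (Cauchy_Schwarz : x1 * x2 + y1 * y2 <= a * b).
  { destruct (Rle_dec (x1 * x2 + y1 * y2) 0); [nra |].
    apply Rsqr_incr_0_var; unfold Rsqr; [| nra].
    replace (a * b * (a * b)) with ((a * a) * (b * b)) by ring. rewrite Ez, Ew.
    pose proof (pow2_ge_0 (x1 * y2 - x2 * y1)). nra. }
  apply Rsqr_incr_0_var; unfold Rsqr; nra.
Qed.

Lemma Cnorm_sub (z w : Cx) : Cnorm (Csub z w) <= Cnorm z + Cnorm w.
Proof. unfold Csub. rewrite <- (Cnorm_opp w). apply Cnorm_add. Qed.

Lemma Cnorm_add_lb (z w : Cx) : Cnorm z - Cnorm w <= Cnorm (Cadd z w).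
Proof.
  assert (E : z = Cadd (Cadd z w) (Copp w)).
  { apply Cx_eq; unfold Cadd, Copp; simpl; ring. }
  pose proof (Cnorm_add (Cadd z w) (Copp w)) as H. rewrite <- E, Cnorm_opp in H. lra.
Qed.

Lemma sumsq_pos_of_Cnorm (z : Cx) : 0 < Cnorm z -> 0 < fst z ^ 2 + snd z ^ 2.
Proof. intro H. rewrite <- Cnorm_sq. nra. Qed.

Lemma Cnorm_inv (z : Cx) : 0 < Cnorm z -> Cnorm (Cinv z) = / Cnorm z.
Proof.
  intro H. pose proof (Cnorm_sq z) as E. pose proof (sumsq_pos_of_Cnorm z H).
  apply Cnorm_unique; [left; apply Rinv_0_lt_compat; auto |].
  unfold Cinv; cbv zeta; cbn [fst snd]. rewrite <- E. field_simplify; try lra.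
  rewrite <- E. field. lra.
Qed.

Lemma Cnorm_div (z w : Cx) : 0 < Cnorm w -> Cnorm (Cdiv z w) = Cnorm z / Cnorm w.
Proof. intro H. unfold Cdiv. rewrite Cnorm_mul, Cnorm_inv; auto. Qed.

Lemma dlim_eq f x l l' : derivable_pt_lim f x l -> l = l' -> derivable_pt_lim f x l'.
Proof. intros; subst; auto. Qed.

Lemma dlim_const c x : derivable_pt_lim (fun _ => c) x 0.
Proof. apply (derivable_pt_lim_const c). Qed.

Lemma dlim_plus f g x lf lg : derivable_pt_lim f x lf -> derivable_pt_lim g x lg ->
  derivable_pt_lim (fun t => f t + g t) x (lf + lg).
Proof. intros; apply (derivable_pt_lim_plus f g); auto. Qed.

Lemma dlim_opp f x lf : derivable_pt_lim f x lf ->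
  derivable_pt_lim (fun t => - f t) x (- lf).
Proof. intros; apply (derivable_pt_lim_opp f); auto. Qed.

Lemma dlim_minus f g x lf lg : derivable_pt_lim f x lf -> derivable_pt_lim g x lg ->
  derivable_pt_lim (fun t => f t - g t) x (lf - lg).
Proof. intros; apply (derivable_pt_lim_minus f g); auto. Qed.

Lemma dlim_mult f g x lf lg : derivable_pt_lim f x lf -> derivable_pt_lim g x lg ->
  derivable_pt_lim (fun t => f t * g t) x (lf * g x + f x * lg).
Proof. intros; apply (derivable_pt_lim_mult f g); auto. Qed.

Lemma dlim_div f g x lf lg : derivable_pt_lim f x lf -> derivable_pt_lim g x lg -> g x <> 0 ->
  derivable_pt_lim (fun t => f t / g t) x ((lf * g x - lg * f x) / (g x * g x)).
Proof. intros; apply (derivable_pt_lim_div f g); auto. Qed.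

Lemma dlim_pow2 f x lf : derivable_pt_lim f x lf ->
  derivable_pt_lim (fun t => f t ^ 2) x (2 * f x * lf).
Proof.
  intro H. eapply dlim_eq.
  - eapply derivable_pt_lim_ext; [| apply (dlim_mult f f); eauto]. intro; simpl; ring.
  - simpl; ring.
Qed.

Lemma dlim_sqrt f x lf : derivable_pt_lim f x lf -> 0 < f x ->
  derivable_pt_lim (fun t => sqrt (f t)) x (lf / (2 * sqrt (f x))).
Proof.
  intros H Hf. eapply dlim_eq.
  - apply (derivable_pt_lim_comp f sqrt); eauto. apply derivable_pt_lim_sqrt; auto.
  - unfold Rdiv; ring.
Qed.

Lemma dlim_pow n x : derivable_pt_lim (fun y => y ^ n) x (INR n * x ^ (n - 1)).
Proof. replace (n - 1)%nat with (Nat.pred n) by lia. apply derivable_pt_lim_pow. Qed.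

Lemma dlim_scaled_pow c n x :
  derivable_pt_lim (fun y => c * y ^ n) x (c * (INR n * x ^ (n - 1))).
Proof.
  eapply dlim_eq.
  - apply (dlim_mult (fun _ => c) (fun y => y ^ n)); [apply dlim_const | apply dlim_pow].
  - ring.
Qed.

Lemma Cderiv_eq f x d d' : has_Cderiv f x d -> d = d' -> has_Cderiv f x d'.
Proof. intros; subst; auto. Qed.

Lemma Cderiv_unique f x d1 d2 : has_Cderiv f x d1 -> has_Cderiv f x d2 -> d1 = d2.
Proof. intros [A1 A2] [B1 B2]. apply Cx_eq; eapply uniqueness_limite; eauto. Qed.

Lemma Cderiv_local_ext f g x d a b : a < x < b -> (forall t, a < t < b -> f t = g t) ->
  has_Cderiv f x d -> has_Cderiv g x d.
Proof.
  intros Hx E [H1 H2]; split; eapply derivable_pt_lim_locally_ext; eauto;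
    intros; simpl; rewrite E; auto.
Qed.

Lemma Cderiv_const c x : has_Cderiv (fun _ => c) x (0, 0).
Proof. split; apply dlim_const. Qed.

Lemma Cderiv_RtoC r x l : derivable_pt_lim r x l -> has_Cderiv (fun t => RtoC (r t)) x (RtoC l).
Proof. intros; split; unfold RtoC; cbn [fst snd]; auto. apply dlim_const. Qed.

Lemma Cderiv_add f g x df dg : has_Cderiv f x df -> has_Cderiv g x dg ->
  has_Cderiv (fun t => Cadd (f t) (g t)) x (Cadd df dg).
Proof.
  intros [A1 A2] [B1 B2]; split; unfold Cadd; cbn [fst snd].
  - apply (dlim_plus (fun t => fst (f t)) (fun t => fst (g t))); auto.
  - apply (dlim_plus (fun t => snd (f t)) (fun t => snd (g t))); auto.
Qed.

Lemma Cderiv_mul f g x df dg : has_Cderiv f x df -> has_Cderiv g x dg ->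
  has_Cderiv (fun t => Cmul (f t) (g t)) x (Cadd (Cmul df (g x)) (Cmul (f x) dg)).
Proof.
  intros [A1 A2] [B1 B2]; split; unfold Cmul, Cadd; cbn [fst snd]; eapply dlim_eq.
  - apply (dlim_minus (fun t => fst (f t) * fst (g t)) (fun t => snd (f t) * snd (g t)));
      [apply (dlim_mult (fun t => fst (f t)) (fun t => fst (g t))); eauto
      |apply (dlim_mult (fun t => snd (f t)) (fun t => snd (g t))); eauto].
  - ring.
  - apply (dlim_plus (fun t => fst (f t) * snd (g t)) (fun t => snd (f t) * fst (g t)));
      [apply (dlim_mult (fun t => fst (f t)) (fun t => snd (g t))); eauto
      |apply (dlim_mult (fun t => snd (f t)) (fun t => fst (g t))); eauto].
  - ring.
Qed.

Lemma Cderiv_inv f x df : has_Cderiv f x df -> 0 < Cnorm (f x) ->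
  has_Cderiv (fun t => Cinv (f t)) x (Copp (Cmul df (Cinv (Cmul (f x) (f x))))).
Proof.
  intros [A1 A2] Hn. pose proof (sumsq_pos_of_Cnorm _ Hn) as Hp.
  assert (Dn : derivable_pt_lim (fun t => fst (f t) ^ 2 + snd (f t) ^ 2) x
     (2 * fst (f x) * fst df + 2 * snd (f x) * snd df)).
  { apply (dlim_plus (fun t => fst (f t) ^ 2) (fun t => snd (f t) ^ 2));
      apply (dlim_pow2 (fun t => _ (f t))); auto. }
  assert (Hsq : (fst (f x) * fst (f x) - snd (f x) * snd (f x)) ^ 2 +
                (fst (f x) * snd (f x) + snd (f x) * fst (f x)) ^ 2
              = (fst (f x) ^ 2 + snd (f x) ^ 2) ^ 2) by ring.
  split; unfold Cinv, Copp, Cmul; cbv zeta; cbn [fst snd]; rewrite Hsq.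
  - eapply dlim_eq.
    + apply (dlim_div (fun t => fst (f t)) _ x _ _ A1 Dn); lra.
    + field; lra.
  - eapply dlim_eq.
    + apply (dlim_div (fun t => - snd (f t)) _ x _ _ (dlim_opp _ _ _ A2) Dn); lra.
    + field; lra.
Qed.

Definition Ccont (f : R -> Cx) (x : R) : Prop :=
  continuity_pt (fun t => fst (f t)) x /\ continuity_pt (fun t => snd (f t)) x.

Lemma Ccont_of_Cderiv f x d : has_Cderiv f x d -> Ccont f x.
Proof. intros [A1 A2]; split; apply derivable_continuous_pt; eexists; eauto. Qed.

Lemma cpt_const c x : continuity_pt (fun _ => c) x.
Proof. apply continuity_pt_const. intros a b; auto. Qed.

Lemma cpt_plus f g x : continuity_pt f x -> continuity_pt g x ->
  continuity_pt (fun t => f t + g t) x.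
Proof. intros; apply (continuity_pt_plus f g); auto. Qed.

Lemma cpt_opp f x : continuity_pt f x -> continuity_pt (fun t => - f t) x.
Proof. intros; apply (continuity_pt_opp f); auto. Qed.

Lemma cpt_minus f g x : continuity_pt f x -> continuity_pt g x ->
  continuity_pt (fun t => f t - g t) x.
Proof. intros; apply (continuity_pt_minus f g); auto. Qed.

Lemma cpt_mult f g x : continuity_pt f x -> continuity_pt g x ->
  continuity_pt (fun t => f t * g t) x.
Proof. intros; apply (continuity_pt_mult f g); auto. Qed.

Lemma cpt_div f g x : continuity_pt f x -> continuity_pt g x -> g x <> 0 ->
  continuity_pt (fun t => f t / g t) x.
Proof. intros; apply (continuity_pt_div f g); auto. Qed.

Lemma cpt_sumsq f g x : continuity_pt f x -> continuity_pt g x ->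
  continuity_pt (fun t => f t ^ 2 + g t ^ 2) x.
Proof. intros; apply cpt_plus; simpl; repeat apply cpt_mult; auto; apply cpt_const. Qed.

Lemma Ccont_const c x : Ccont (fun _ => c) x.
Proof. split; apply cpt_const. Qed.

Lemma Ccont_add f g x : Ccont f x -> Ccont g x -> Ccont (fun t => Cadd (f t) (g t)) x.
Proof. intros [] []; split; unfold Cadd; cbn [fst snd]; apply cpt_plus; auto. Qed.

Lemma Ccont_opp f x : Ccont f x -> Ccont (fun t => Copp (f t)) x.
Proof. intros []; split; unfold Copp; cbn [fst snd]; apply cpt_opp; auto. Qed.

Lemma Ccont_sub f g x : Ccont f x -> Ccont g x -> Ccont (fun t => Csub (f t) (g t)) x.
Proof. intros; unfold Csub; apply Ccont_add; auto; apply Ccont_opp; auto. Qed.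

Lemma Ccont_mul f g x : Ccont f x -> Ccont g x -> Ccont (fun t => Cmul (f t) (g t)) x.
Proof.
  intros [] []; split; unfold Cmul; cbn [fst snd];
    first [apply cpt_minus | apply cpt_plus]; apply cpt_mult; auto.
Qed.

Lemma Ccont_inv f x : Ccont f x -> 0 < Cnorm (f x) -> Ccont (fun t => Cinv (f t)) x.
Proof.
  intros [A1 A2] Hn. pose proof (sumsq_pos_of_Cnorm _ Hn).
  pose proof (cpt_sumsq _ _ x A1 A2).
  split; unfold Cinv; cbv zeta; cbn [fst snd]; apply cpt_div; auto; try lra.
  apply cpt_opp; auto.
Qed.

Lemma Ccont_div f g x : Ccont f x -> Ccont g x -> 0 < Cnorm (g x) ->
  Ccont (fun t => Cdiv (f t) (g t)) x.
Proof. intros; unfold Cdiv; apply Ccont_mul; auto; apply Ccont_inv; auto. Qed.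

Lemma Ccont_norm f x : Ccont f x -> continuity_pt (fun t => Cnorm (f t)) x.
Proof.
  intros [A1 A2]. unfold Cnorm.
  apply (continuity_pt_comp (fun t => fst (f t) ^ 2 + snd (f t) ^ 2) sqrt).
  - apply cpt_sumsq; auto.
  - apply continuity_pt_sqrt. nra.
Qed.

Lemma sqrt_1_plus_ratio_sq x y : x <> 0 -> sqrt (1 + (y / x)²) = Cnorm (x, y) / Rabs x.
Proof.
  intro Hx. pose proof (Cnorm_sq (x, y)) as E. pose proof (Cnorm_ge0 (x, y)).
  cbn [fst snd] in E. pose proof (Rabs_pos_lt x Hx).
  apply sqrt_lem_1; [pose proof (Rle_0_sqr (y / x)); lra | unfold Rdiv; apply Rmult_le_pos; [lra | left; apply Rinv_0_lt_compat; lra] |].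
  unfold Rsqr. replace (Cnorm (x, y) / Rabs x * (Cnorm (x, y) / Rabs x))
    with ((Cnorm (x, y) * Cnorm (x, y)) / (Rabs x * Rabs x)) by (field; lra).
  rewrite E, <- Rabs_mult, Rabs_pos_eq by nra. field. auto.
Qed.

Lemma Carg_polar (z : Cx) : 0 < Cnorm z ->
  Cnorm z * cos (Carg z) = fst z /\ Cnorm z * sin (Carg z) = snd z.
Proof.
  intro Hr. destruct z as [x y]. pose proof (Cnorm_sq (x, y)) as E. cbn [fst snd] in *.
  set (r := Cnorm (x, y)) in *.
  unfold Carg; cbn [fst snd].
  destruct (Rlt_dec 0 x).
  - rewrite cos_atan, sin_atan, sqrt_1_plus_ratio_sq by lra. fold r.
    rewrite Rabs_pos_eq by lra. split; field; lra.
  - destruct (Rlt_dec x 0).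
    + assert (Hatan : r * cos (atan (y / x)) = - x /\ r * sin (atan (y / x)) = - y).
      { rewrite cos_atan, sin_atan, sqrt_1_plus_ratio_sq by lra. fold r.
        rewrite Rabs_left by lra. split; field; lra. }
      destruct (Rle_dec 0 y).
      * rewrite neg_cos, neg_sin. lra.
      * rewrite cos_minus, sin_minus, cos_PI, sin_PI. lra.
    + assert (x = 0) by lra. subst x.
      destruct (Rlt_dec 0 y); [| destruct (Rlt_dec y 0)].
      * rewrite cos_PI2, sin_PI2. assert (r = y) by nra. lra.
      * rewrite cos_neg, sin_neg, cos_PI2, sin_PI2. assert (r = - y) by nra. lra.
      * assert (y = 0) by lra. subst. nra.
Qed.

(* [Cslit z] says that [z] lies off the closed half-line (-oo, 0], where the
   principal branches of the square root and of [Cpow32] are smooth. *)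
Definition Cslit (z : Cx) : Prop := 0 < Cnorm z + fst z.

Lemma Cslit_norm_pos z : Cslit z -> 0 < Cnorm z.
Proof.
  unfold Cslit; intro H. pose proof (Cnorm_fst z). unfold Rabs in *.
  destruct (Rcase_abs (fst z)); lra.
Qed.

Lemma Carg_slit_range z : Cslit z -> - PI < Carg z < PI.
Proof.
  intro G. pose proof (Cslit_norm_pos z G). destruct z as [x y]. unfold Cslit in G.
  pose proof (Cnorm_sq (x, y)). cbn [fst snd] in *. set (r := Cnorm (x, y)) in *.
  pose proof PI_RGT_0. pose proof (atan_bound (y / x)).
  unfold Carg; cbn [fst snd].
  destruct (Rlt_dec 0 x); [lra |].
  destruct (Rlt_dec x 0).
  - destruct (Rle_dec 0 y).
    + destruct r1.
      * assert (Hq : y / x < 0) by (apply Rdiv_pos_neg; lra).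
        pose proof (atan_increasing _ _ Hq). rewrite atan_0 in *. lra.
      * subst y. assert (r = - x) by nra. lra.
    + assert (Hq : 0 < y / x) by (apply Rdiv_neg_neg; lra).
      pose proof (atan_increasing _ _ Hq). rewrite atan_0 in *. lra.
  - destruct (Rlt_dec 0 y); [lra |]. destruct (Rlt_dec y 0); lra.
Qed.

Definition Csqrt_re (z : Cx) : R := sqrt ((Cnorm z + fst z) / 2).
Definition Csqrt (z : Cx) : Cx := (Csqrt_re z, snd z / (2 * Csqrt_re z)).

Lemma Csqrt_re_pos z : Cslit z -> 0 < Csqrt_re z.
Proof. intro G; unfold Csqrt_re, Cslit in *. apply sqrt_lt_R0. lra. Qed.

Lemma Csqrt_re_sq z : Cslit z -> Csqrt_re z * Csqrt_re z = (Cnorm z + fst z) / 2.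
Proof. intro G; unfold Csqrt_re, Cslit in *. apply sqrt_sqrt. lra. Qed.

Lemma Csqrt_sq z : Cslit z -> Cmul (Csqrt z) (Csqrt z) = z.
Proof.
  intro G. pose proof (Csqrt_re_pos z G). pose proof (Csqrt_re_sq z G) as Es.
  pose proof (Cnorm_sq z). unfold Cslit in G.
  unfold Csqrt, Cmul; apply Cx_eq; cbn [fst snd]; set (s := Csqrt_re z) in *.
  - replace (s * s - snd z / (2 * s) * (snd z / (2 * s)))
      with (s * s - snd z ^ 2 / (4 * (s * s))) by (field; lra).
    rewrite Es. replace (snd z ^ 2) with (Cnorm z * Cnorm z - fst z ^ 2) by lra.
    field. lra.
  - field; lra.
Qed.

Lemma Cnorm_Csqrt z : Cslit z -> Cnorm (Csqrt z) = sqrt (Cnorm z).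
Proof.
  intro G. pose proof (Cslit_norm_pos z G).
  symmetry. apply sqrt_lem_1; [lra | apply Cnorm_ge0 |].
  rewrite <- Cnorm_mul, Csqrt_sq; auto.
Qed.

(* With [phi = arg z / 2], [Csqrt z = sqrt |z| e^(i phi)] by the half-angle formulas,
   and [3/2 arg z = arg z + phi]. *)
Lemma Cpow32_slit z : Cslit z -> Cpow32 z = Cmul z (Csqrt z).
Proof.
  intro G. pose proof (Cslit_norm_pos z G) as Hr. pose proof (Carg_slit_range z G).
  destruct (Carg_polar z Hr) as [Hc Hs].
  pose proof (Csqrt_re_pos z G). pose proof (Csqrt_re_sq z G) as Hss.
  unfold Cpow32. destruct (Req_EM_T (Cnorm z) 0); [lra |].
  set (r := Cnorm z) in *. set (th := Carg z) in *. set (s := Csqrt_re z) in *.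
  set (ph := th / 2).
  assert (Eth : th = 2 * ph) by (unfold ph; field).
  assert (Hcp : 0 < cos ph) by (apply cos_gt_0; unfold ph; lra).
  assert (Hsr : 0 < sqrt r) by (apply sqrt_lt_R0; auto).
  assert (Hrr : sqrt r * sqrt r = r) by (apply sqrt_sqrt; lra).
  assert (Ere : sqrt r * cos ph = s).
  { unfold s, Csqrt_re. fold r. symmetry. apply sqrt_lem_1; [nra | nra |].
    replace (sqrt r * cos ph * (sqrt r * cos ph))
      with ((sqrt r * sqrt r) * (cos ph * cos ph)) by ring.
    assert (cos th = 2 * cos ph * cos ph - 1) by (rewrite Eth; apply cos_2a_cos).
    rewrite Hrr. nra. }
  assert (Eim : sqrt r * sin ph = snd z / (2 * s)).
  { rewrite <- Hs, <- Ere, Eth, sin_2a.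
    replace (r * (2 * sin ph * cos ph))
      with ((sqrt r * sqrt r) * (2 * sin ph * cos ph)) by (rewrite Hrr; ring).
    field. lra. }
  assert (Ep : Rpower r (3 / 2) = r * sqrt r).
  { replace (3 / 2) with (1 + / 2) by field. rewrite Rpower_plus, Rpower_1, Rpower_sqrt; auto. }
  replace (3 / 2 * th) with (th + ph) by (unfold ph; field).
  rewrite Ep, cos_plus, sin_plus.
  unfold Cmul, Csqrt; apply Cx_eq; cbn [fst snd]; fold s;
    rewrite <- Eim, <- Ere, <- Hc, <- Hs; ring.
Qed.

Lemma Cnorm_Cpow32 z : Cslit z -> Cnorm (Cpow32 z) = Cnorm z * sqrt (Cnorm z).
Proof. intro G. rewrite Cpow32_slit, Cnorm_mul, Cnorm_Csqrt; auto. Qed.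

Lemma continuity_pt_pos_nbhd f x : continuity_pt f x -> 0 < f x ->
  exists d, 0 < d /\ forall t, x - d < t < x + d -> 0 < f t.
Proof.
  intros Hc Hp. destruct (Hc (f x / 2)) as [d [Hd H]]; [lra |].
  exists d; split; auto. intros t Ht.
  destruct (Req_dec t x) as [-> | Hne]; auto.
  assert (Rabs (f t - f x) < f x / 2).
  { apply (H t). unfold D_x, no_cond. split; [split; auto |].
    simpl; unfold R_dist, Rabs. destruct (Rcase_abs (t - x)); lra. }
  unfold Rabs in *; destruct (Rcase_abs (f t - f x)); lra.
Qed.

Lemma Cslit_nbhd q x dq : has_Cderiv q x dq -> Cslit (q x) ->
  exists d, 0 < d /\ forall t, x - d < t < x + d -> Cslit (q t).
Proof.
  intros Hd G. destruct (Ccont_of_Cderiv _ _ _ Hd) as [C1 C2].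
  apply continuity_pt_pos_nbhd; auto.
  apply cpt_plus; auto. apply Ccont_norm. split; auto.
Qed.

Lemma Cnorm_2Csqrt z : Cslit z -> Cnorm (Cmul (RtoC 2) (Csqrt z)) = 2 * sqrt (Cnorm z).
Proof. intro G. rewrite Cnorm_mul, Cnorm_RtoC, Cnorm_Csqrt, Rabs_pos_eq; auto; lra. Qed.

Lemma Cderiv_Csqrt_ex q x dq : has_Cderiv q x dq -> Cslit (q x) ->
  exists d, has_Cderiv (fun t => Csqrt (q t)) x d.
Proof.
  intros [A1 A2] G. pose proof (sumsq_pos_of_Cnorm _ (Cslit_norm_pos _ G)).
  pose proof (Csqrt_re_pos _ G) as Hs. unfold Csqrt_re, Cslit, Cnorm in *.
  set (N := fun t => fst (q t) ^ 2 + snd (q t) ^ 2).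
  set (Re := fun t => sqrt ((sqrt (N t) + fst (q t)) / 2)).
  assert (DN : exists l, derivable_pt_lim (fun t => sqrt (N t)) x l).
  { eexists. apply dlim_sqrt; [| auto].
    apply (dlim_plus (fun t => fst (q t) ^ 2) (fun t => snd (q t) ^ 2));
      apply (dlim_pow2 (fun t => _ (q t))); eauto. }
  destruct DN as [lN DN].
  assert (DRe : exists l, derivable_pt_lim Re x l).
  { eexists. apply (dlim_sqrt (fun t => (sqrt (N t) + fst (q t)) / 2)); [| unfold N; lra].
    apply (dlim_div _ (fun _ => 2)); [| apply dlim_const | lra].
    apply (dlim_plus (fun t => sqrt (N t)) (fun t => fst (q t))); eauto. }
  destruct DRe as [lRe DRe].
  assert (DIm : exists l, derivable_pt_lim (fun t => snd (q t) / (2 * Re t)) x l).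
  { eexists. apply (dlim_div (fun t => snd (q t))); eauto; [| unfold Re, N; lra].
    apply (dlim_mult (fun _ => 2) Re); eauto. apply dlim_const. }
  destruct DIm as [lIm DIm].
  exists (lRe, lIm). split; auto.
Qed.

Lemma Cdiv_mul_cancel w d : 0 < Cnorm w -> Cdiv (Cmul w d) w = d.
Proof.
  intro H. pose proof (sumsq_pos_of_Cnorm _ H).
  unfold Cdiv, Cmul, Cinv; apply Cx_eq; cbv zeta; cbn [fst snd]; field; lra.
Qed.

(* Differentiating [Csqrt q * Csqrt q = q], which holds near [x], gives [q' = 2 Csqrt q (Csqrt q)']. *)
Lemma Cderiv_Csqrt q x dq : has_Cderiv q x dq -> Cslit (q x) ->
  has_Cderiv (fun t => Csqrt (q t)) x (Cdiv dq (Cmul (RtoC 2) (Csqrt (q x)))).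
Proof.
  intros Hq G. destruct (Cderiv_Csqrt_ex q x dq Hq G) as [dS HS].
  destruct (Cslit_nbhd q x dq Hq G) as [d [Hd0 Hd1]].
  assert (HSS : has_Cderiv q x (Cadd (Cmul dS (Csqrt (q x))) (Cmul (Csqrt (q x)) dS))).
  { eapply Cderiv_local_ext with (a := x - d) (b := x + d); [lra | | exact (Cderiv_mul _ _ _ _ _ HS HS)].
    intros t Ht. apply Csqrt_sq, Hd1; auto. }
  rewrite (Cderiv_unique _ _ _ _ Hq HSS).
  replace (Cadd (Cmul dS (Csqrt (q x))) (Cmul (Csqrt (q x)) dS))
    with (Cmul (Cmul (RtoC 2) (Csqrt (q x))) dS)
    by (unfold Cadd, Cmul, RtoC; apply Cx_eq; cbn [fst snd]; ring).
  rewrite Cdiv_mul_cancel; [auto |]. rewrite Cnorm_2Csqrt by auto.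
  pose proof (sqrt_lt_R0 _ (Cslit_norm_pos _ G)). lra.
Qed.

Definition Clincomb (l : list nat) (A : nat -> Cx) (T : nat -> R -> R) (x : R) : Cx :=
  fold_right (fun i acc => Cadd (Cmul (A i) (RtoC (T i x))) acc) (0, 0) l.

Lemma Clincomb_deriv l A T T' x : (forall i, derivable_pt_lim (T i) x (T' i x)) ->
  has_Cderiv (Clincomb l A T) x (Clincomb l A T' x).
Proof.
  intro HT. induction l as [| i l IH]; simpl; [apply Cderiv_const |].
  eapply Cderiv_eq.
  - apply Cderiv_add; [| exact IH].
    apply Cderiv_mul; [apply Cderiv_const | apply (Cderiv_RtoC (T i)), HT].
  - unfold Cadd, Cmul, RtoC; apply Cx_eq; cbn [fst snd]; ring.
Qed.

Lemma Clincomb_cont l A T x : (forall i, continuity_pt (T i) x) -> Ccont (Clincomb l A T) x.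
Proof.
  intro HT. induction l as [| i l IH]; simpl; [apply Ccont_const |].
  apply Ccont_add; auto. apply Ccont_mul; [apply Ccont_const |].
  split; unfold RtoC; cbn [fst snd]; [apply HT | apply cpt_const].
Qed.

Lemma Clincomb_bound l A T x B : (forall i, In i l -> Cnorm (A i) * Rabs (T i x) <= B) ->
  Cnorm (Clincomb l A T x) <= INR (length l) * B.
Proof.
  intro HB. induction l as [| i l IH]; cbn [Clincomb fold_right length].
  - rewrite Cnorm_0. simpl; lra.
  - eapply Rle_trans; [apply Cnorm_add |]. rewrite Cnorm_mul, Cnorm_RtoC, S_INR.
    assert (Cnorm (A i) * Rabs (T i x) <= B) by (apply HB; left; auto).
    assert (Cnorm (Clincomb l A T x) <= INR (length l) * B)
      by (apply IH; intros; apply HB; right; auto).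
    unfold Clincomb in *. lra.
Qed.

Lemma monomial_bound c C k n x : 0 <= x -> 0 <= c <= C -> (k <= n)%nat ->
  Rabs (c * x ^ k) <= C * (1 + x) ^ n.
Proof.
  intros Hx Hc Hk. pose proof (pow_le x k Hx).
  rewrite Rabs_pos_eq by (apply Rmult_le_pos; lra).
  apply Rmult_le_compat; try lra.
  apply Rle_trans with ((1 + x) ^ k); [apply pow_incr; lra | apply Rle_pow; auto; lra].
Qed.

Definition d2Qfun (m : nat) (a : nat -> Cx) (x : R) : Cx :=
  Cadd (RtoC (INR m * (INR (m - 1) * x ^ (m - 1 - 1))))
       (Clincomb (seq 0 m) (fun i => a (S i))
          (fun i x => INR (m - S i) * (INR (m - S i - 1) * x ^ (m - S i - 1 - 1))) x).

Lemma Qfun_deriv m a lam x : has_Cderiv (Qfun m a lam) x (dQfun m a x).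
Proof.
  unfold Qfun, dQfun. eapply Cderiv_eq.
  - apply Cderiv_add; [apply (Cderiv_RtoC (fun t => t ^ m)), dlim_pow |].
    apply Cderiv_add; [| apply Cderiv_const].
    apply (Clincomb_deriv (seq 0 m) (fun i => a (S i)) (fun i t => t ^ (m - S i))
             (fun i t => INR (m - S i) * t ^ (m - S i - 1))).
    intro i. apply dlim_pow.
  - unfold Clincomb, Cadd; apply Cx_eq; cbn [fst snd]; ring.
Qed.

Lemma dQfun_deriv m a x : has_Cderiv (dQfun m a) x (d2Qfun m a x).
Proof.
  apply Cderiv_add; [apply (Cderiv_RtoC (fun t => INR m * t ^ (m - 1))), dlim_scaled_pow |].
  apply (Clincomb_deriv (seq 0 m) (fun i => a (S i))
           (fun i t => INR (m - S i) * t ^ (m - S i - 1))).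
  intro i. apply dlim_scaled_pow.
Qed.

Lemma d2Qfun_cont m a x : Ccont (d2Qfun m a) x.
Proof.
  assert (Hmono : forall c n, continuity_pt (fun t => c * t ^ n) x).
  { intros c n. apply derivable_continuous_pt. eexists. apply dlim_scaled_pow. }
  apply Ccont_add.
  - split; unfold RtoC; cbn [fst snd]; [| apply cpt_const].
    apply cpt_mult; [apply cpt_const | apply Hmono].
  - apply Clincomb_cont. intro i. apply cpt_mult; [apply cpt_const | apply Hmono].
Qed.

Section Coefficient_bounds.
Variables (m : nat) (a : nat -> Cx) (M : R).
Hypothesis Ha : forall i, (1 <= i <= m)%nat -> Cnorm (a i) <= M.

Let Clincomb_coeff_bound T x C n :
  (forall i, (i < m)%nat -> Rabs (T i x) <= C * (1 + x) ^ n) ->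
  Cnorm (Clincomb (seq 0 m) (fun i => a (S i)) T x) <= INR m * M * (C * (1 + x) ^ n).
Proof.
  intro HT. rewrite Rmult_assoc.
  replace (INR m) with (INR (length (seq 0 m))) by (rewrite length_seq; auto).
  apply Clincomb_bound.
  intros i Hi. apply in_seq in Hi.
  apply Rmult_le_compat; [apply Cnorm_ge0 | apply Rabs_pos | apply Ha; lia | apply HT; lia].
Qed.

Lemma polyP_bound x : 0 <= x -> Cnorm (polyP m a x) <= INR m * M * (1 + x) ^ (m - 1).
Proof.
  intro Hx. rewrite <- (Rmult_1_l ((1 + x) ^ (m - 1))).
  apply (Clincomb_coeff_bound (fun i t => t ^ (m - S i))). intros i Hi.
  rewrite <- (Rmult_1_l (x ^ _)). apply monomial_bound; auto; lra || lia.
Qed.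

Lemma dQfun_bound x : 0 <= x ->
  Cnorm (dQfun m a x) <= INR m * (1 + INR m * M) * (1 + x) ^ (m - 1).
Proof.
  intro Hx. pose proof (pos_INR m).
  assert (Hc : forall k, (k <= m)%nat -> 0 <= INR k <= INR m)
    by (intros; split; [apply pos_INR | apply le_INR; lia]).
  eapply Rle_trans; [apply Cnorm_add |]. rewrite Cnorm_RtoC.
  pose proof (monomial_bound (INR m) (INR m) (m - 1) (m - 1) x Hx ltac:(lra) (le_n _)).
  assert (Hterms : forall i, (i < m)%nat ->
    Rabs (INR (m - S i) * x ^ (m - S i - 1)) <= INR m * (1 + x) ^ (m - 1)).
  { intros i Hi. apply monomial_bound; [auto | apply Hc; lia | lia]. }
  pose proof (Clincomb_coeff_bound (fun i t => INR (m - S i) * t ^ (m - S i - 1)) x _ _ Hterms).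
  unfold Clincomb in *.
  assert (INR m * (1 + INR m * M) * (1 + x) ^ (m - 1)
          = INR m * (1 + x) ^ (m - 1) + INR m * M * (INR m * (1 + x) ^ (m - 1))) by ring.
  lra.
Qed.

Lemma d2Qfun_bound x : 0 <= x ->
  Cnorm (d2Qfun m a x) <= INR m * INR m * (1 + INR m * M) * (1 + x) ^ (m - 2).
Proof.
  intro Hx. pose proof (pos_INR m).
  assert (Hc : forall k l, (k <= m)%nat -> (l <= m)%nat -> 0 <= INR k * INR l <= INR m * INR m).
  { intros k l Hk Hl. pose proof (le_INR _ _ Hk). pose proof (le_INR _ _ Hl).
    pose proof (pos_INR k). pose proof (pos_INR l). split; [nra |].
    apply Rmult_le_compat; lra. }
  eapply Rle_trans; [apply Cnorm_add |]. unfold d2Qfun. rewrite Cnorm_RtoC, <- Rmult_assoc.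
  assert (Hlead : Rabs (INR m * INR (m - 1) * x ^ (m - 1 - 1)) <= INR m * INR m * (1 + x) ^ (m - 2))
    by (apply monomial_bound; [auto | apply Hc; lia | lia]).
  assert (Hterms : forall i, (i < m)%nat ->
    Rabs (INR (m - S i) * (INR (m - S i - 1) * x ^ (m - S i - 1 - 1)))
      <= INR m * INR m * (1 + x) ^ (m - 2)).
  { intros i Hi. rewrite <- Rmult_assoc. apply monomial_bound; [auto | apply Hc; lia | lia]. }
  pose proof (Clincomb_coeff_bound
    (fun i t => INR (m - S i) * (INR (m - S i - 1) * t ^ (m - S i - 1 - 1))) x _ _ Hterms).
  assert (INR m * INR m * (1 + INR m * M) * (1 + x) ^ (m - 2) = INR m * INR m * (1 + x) ^ (m - 2)
            + INR m * M * (INR m * INR m * (1 + x) ^ (m - 2))) by ring.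
  lra.
Qed.
End Coefficient_bounds.

Lemma sector_re_lb lam delta : 0 < Cnorm lam -> 0 < delta <= PI / 2 ->
  Rabs (Carg lam) <= PI - delta -> - (Cnorm lam * cos delta) <= fst lam.
Proof.
  intros HL Hd Ha. destruct (Carg_polar lam HL) as [Hc _]. rewrite <- Hc.
  assert (Eabs : cos (Carg lam) = cos (Rabs (Carg lam))).
  { unfold Rabs; destruct (Rcase_abs (Carg lam)); auto. rewrite cos_neg; auto. }
  assert (- cos delta <= cos (Carg lam)).
  { rewrite Eabs, <- cos_pi_minus. apply cos_decr_1; try lra. apply Rabs_pos. }
  nra.
Qed.

Section Shifted_sector.
Variables (t c : R) (lam : Cx).
Hypotheses (Ht : 0 <= t) (Hc0 : 0 < c) (Hc1 : c < 1) (Hu : - (Cnorm lam * c) <= fst lam).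
Let w : Cx := (t + fst lam, snd lam).

Lemma shifted_norm_lb : (1 - c) / 2 * (t + Cnorm lam) * (t + Cnorm lam) <= Cnorm w * Cnorm w.
Proof.
  pose proof (Cnorm_ge0 lam). pose proof (Cnorm_sq lam). rewrite Cnorm_sq. unfold w; cbn [fst snd].
  assert (0 <= t * (fst lam + Cnorm lam * c)) by (apply Rmult_le_pos; lra).
  assert (0 <= (1 + c) * ((t - Cnorm lam) * (t - Cnorm lam)))
    by (apply Rmult_le_pos; [lra | apply Rle_0_sqr]).
  assert (E : (t + fst lam) ^ 2 + snd lam ^ 2 - (1 - c) / 2 * (t + Cnorm lam) * (t + Cnorm lam)
              = 2 * (t * (fst lam + Cnorm lam * c))
                + (1 + c) * ((t - Cnorm lam) * (t - Cnorm lam)) / 2) by nra.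
  lra.
Qed.

Lemma shifted_re_lb : - fst w <= c * Cnorm w.
Proof.
  pose proof (Cnorm_ge0 lam). pose proof (Cnorm_sq lam). pose proof (Cnorm_ge0 w).
  pose proof (Cnorm_sq w) as Ew. unfold w in *; cbn [fst snd] in *.
  destruct (Rle_lt_dec 0 (t + fst lam)); [nra |].
  apply Rsqr_incr_0_var; [unfold Rsqr | nra].
  assert ((t + fst lam) * (t + fst lam) <= fst lam * fst lam) by nra.
  assert (fst lam * fst lam <= Cnorm lam * Cnorm lam * (c * c)) by nra.
  nra.
Qed.
End Shifted_sector.

Lemma Cslit_perturb (w p : Cx) (c k D : R) : 0 < c < 1 -> 0 < k -> 0 < D ->
  k * D <= Cnorm w -> - fst w <= c * Cnorm w -> Cnorm p <= (1 - c) * k / 4 * D ->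
  Cslit (Cadd w p) /\ k / 2 * D <= Cnorm (Cadd w p).
Proof.
  intros Hc Hk HD Hw Hre Hp. pose proof (Cnorm_add_lb w p). pose proof (Cnorm_fst p).
  assert (0 < (1 - c) * k * D) by (apply Rmult_lt_0_compat; [nra | lra]).
  assert ((1 - c) * (k * D) <= (1 - c) * Cnorm w) by (apply Rmult_le_compat_l; lra).
  split.
  - unfold Cslit. change (fst (Cadd w p)) with (fst w + fst p).
    unfold Rabs in *; destruct (Rcase_abs (fst p)); lra.
  - nra.
Qed.

Lemma Qfun_slit_lb m a lam c x : 0 < c < 1 -> 0 < Cnorm lam -> 0 <= x ->
  - (Cnorm lam * c) <= fst lam ->
  Cnorm (polyP m a x) <= (1 - c) * sqrt ((1 - c) / 2) / 4 * (x ^ m + Cnorm lam) ->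
  Cslit (Qfun m a lam x) /\
  sqrt ((1 - c) / 2) / 2 * (x ^ m + Cnorm lam) <= Cnorm (Qfun m a lam x).
Proof.
  intros Hc HL Hx Hu Hp. pose proof (pow_le x m Hx).
  set (k := sqrt ((1 - c) / 2)) in *.
  assert (Hk : 0 < k) by (apply sqrt_lt_R0; lra).
  assert (Hkk : k * k = (1 - c) / 2) by (apply sqrt_sqrt; lra).
  replace (Qfun m a lam x) with (Cadd (x ^ m + fst lam, snd lam) (polyP m a x))
    by (unfold Qfun, Cadd, RtoC; apply Cx_eq; cbn [fst snd]; ring).
  apply Cslit_perturb with (c := c); auto; try lra.
  - apply Rsqr_incr_0_var; [unfold Rsqr | apply Cnorm_ge0].
    pose proof (shifted_norm_lb (x ^ m) c lam). nra.
  - apply shifted_re_lb; auto; lra.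
Qed.

Lemma poly_absorb (n : nat) (A eta : R) : 0 <= A -> 0 < eta ->
  exists C0, 0 <= C0 /\ forall x, 0 <= x -> A * (1 + x) ^ n <= eta * x ^ S n + C0.
Proof.
  intros HA He. set (K := 1 + A * 2 ^ n / eta).
  assert (HK0 : 0 <= A * 2 ^ n / eta)
    by (apply Rmult_le_pos; [apply Rmult_le_pos; auto; apply pow_le; lra
                            | left; apply Rinv_0_lt_compat; auto]).
  assert (HK : 1 <= K) by (unfold K; lra).
  exists (A * (1 + K) ^ n). split; [apply Rmult_le_pos; auto; apply pow_le; lra |].
  intros x Hx. pose proof (pow_le x n Hx). pose proof (pow_le (1 + K) n ltac:(lra)).
  assert (0 <= eta * x ^ S n) by (apply Rmult_le_pos; [lra | apply pow_le; auto]).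
  destruct (Rle_lt_dec x K).
  - assert ((1 + x) ^ n <= (1 + K) ^ n) by (apply pow_incr; split; lra). nra.
  - assert ((1 + x) ^ n <= 2 ^ n * x ^ n) by (rewrite <- Rpow_mult_distr; apply pow_incr; split; lra).
    assert (A * 2 ^ n <= eta * x).
    { apply Rmult_le_reg_r with (/ eta); [apply Rinv_0_lt_compat; auto |].
      replace (eta * x * / eta) with x by (field; lra). unfold K in *. lra. }
    assert (0 <= A * (1 + K) ^ n) by (apply Rmult_le_pos; auto).
    simpl. nra.
Qed.

Lemma Qfun_sector_lb (m : nat) (delta M : R) : (1 <= m)%nat -> 0 < delta < PI / 2 ->
  exists kap R0, 0 < kap /\ 0 < R0 /\
  forall a lam, (forall i, (1 <= i <= m)%nat -> Cnorm (a i) <= M) ->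
    R0 <= Cnorm lam -> Rabs (Carg lam) <= PI - delta ->
    forall x, 0 <= x -> Cslit (Qfun m a lam x) /\ kap * (x ^ m + Cnorm lam) <= Cnorm (Qfun m a lam x).
Proof.
  intros Hm Hd. pose proof PI_RGT_0.
  set (c := cos delta).
  assert (Hc : 0 < c < 1).
  { split; [apply cos_gt_0; lra |]. rewrite <- cos_0. apply cos_decreasing_1; lra. }
  set (k := sqrt ((1 - c) / 2)). set (eta := (1 - c) * k / 4).
  assert (Hk : 0 < k) by (apply sqrt_lt_R0; lra).
  assert (Heta : 0 < eta) by (unfold eta; assert (0 < (1 - c) * k) by (apply Rmult_lt_0_compat; lra); lra).
  assert (HA : 0 <= INR m * Rabs M) by (apply Rmult_le_pos; [apply pos_INR | apply Rabs_pos]).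
  destruct (poly_absorb (m - 1) _ eta HA Heta) as [C0 [HC0 Habs]].
  replace (S (m - 1)) with m in Habs by lia.
  exists (k / 2), (1 + C0 / eta). split; [lra |].
  assert (0 <= C0 / eta) by (apply Rmult_le_pos; [lra | left; apply Rinv_0_lt_compat; lra]).
  split; [lra |].
  intros a lam Ha HL Harg x Hx. apply Qfun_slit_lb; auto; try lra.
  - apply sector_re_lb; auto; lra.
  - assert (Ha' : forall i, (1 <= i <= m)%nat -> Cnorm (a i) <= Rabs M)
      by (intros; eapply Rle_trans; [apply Ha; auto | apply Rle_abs]).
    eapply Rle_trans; [apply (polyP_bound m a _ Ha' x Hx) |].
    assert (C0 <= eta * Cnorm lam).
    { apply Rmult_le_reg_r with (/ eta); [apply Rinv_0_lt_compat; auto |].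
      replace (eta * Cnorm lam * / eta) with (Cnorm lam) by (field; lra).
      unfold Rdiv in *. lra. }
    specialize (Habs x Hx). fold k eta. lra.
Qed.

Definition sentry (g h gp : Cx) (j k : nat) : Cx :=
  let den := Cadd (RtoC 1) (Cmul g g) in
  match j, k with
  | 1%nat, 1%nat => Cdiv (Csub (Cmul h g) (Cmul gp g)) den
  | 1%nat, 2%nat => Cdiv (Cadd (Copp (Cmul h (Cmul g g))) gp) den
  | 2%nat, 1%nat => Cdiv (Csub (Copp (Cmul h (Cmul g g))) gp) den
  | _, _ => Cdiv (Csub (Copp (Cmul h g)) (Cmul gp g)) den
  end.

Lemma sentry_den_lb g : Cnorm g <= 1 / 2 -> 3 / 4 <= Cnorm (Cadd (RtoC 1) (Cmul g g)).
Proof.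
  intro H. pose proof (Cnorm_add_lb (RtoC 1) (Cmul g g)) as Hlb.
  rewrite Cnorm_RtoC, Cnorm_mul, Rabs_pos_eq in Hlb by lra.
  pose proof (Cnorm_ge0 g). nra.
Qed.

Lemma sentry_bound g h gp j k : (j = 1 \/ j = 2)%nat -> (k = 1 \/ k = 2)%nat ->
  Cnorm g <= 1 / 2 -> Cnorm (sentry g h gp j k) <= 4 / 3 * (Cnorm h * Cnorm g + Cnorm gp).
Proof.
  intros Hj Hk Hg. pose proof (sentry_den_lb g Hg).
  pose proof (Cnorm_ge0 g). pose proof (Cnorm_ge0 h). pose proof (Cnorm_ge0 gp).
  assert (Cnorm g * Cnorm g <= Cnorm g) by nra.
  assert (Cnorm h * (Cnorm g * Cnorm g) <= Cnorm h * Cnorm g) by (apply Rmult_le_compat_l; lra).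
  assert (Cnorm gp * Cnorm g <= Cnorm gp) by nra.
  assert (Hnum : forall N, Cnorm N <= Cnorm h * Cnorm g + Cnorm gp ->
    Cnorm (Cdiv N (Cadd (RtoC 1) (Cmul g g))) <= 4 / 3 * (Cnorm h * Cnorm g + Cnorm gp)).
  { intros N HN. rewrite Cnorm_div by lra.
    apply Rle_trans with (Cnorm N / (3 / 4)); [| lra].
    apply Rmult_le_compat_l; [apply Cnorm_ge0 | apply Rinv_le_contravar; lra]. }
  unfold sentry. destruct Hj as [-> | ->], Hk as [-> | ->]; apply Hnum.
  - eapply Rle_trans; [apply Cnorm_sub |]. rewrite !Cnorm_mul. nra.
  - eapply Rle_trans; [apply Cnorm_add |]. rewrite Cnorm_opp, !Cnorm_mul. lra.
  - eapply Rle_trans; [apply Cnorm_sub |]. rewrite Cnorm_opp, !Cnorm_mul. lra.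
  - eapply Rle_trans; [apply Cnorm_sub |]. rewrite Cnorm_opp, !Cnorm_mul. nra.
Qed.

Lemma sentry_cont (g h gp : R -> Cx) j k x : Ccont g x -> Ccont h x -> Ccont gp x ->
  Cnorm (g x) <= 1 / 2 -> Ccont (fun t => sentry (g t) (h t) (gp t) j k) x.
Proof.
  intros Cg Ch Cp Hg. pose proof (sentry_den_lb _ Hg).
  assert (Ccont (fun t => Cadd (RtoC 1) (Cmul (g t) (g t))) x)
    by (apply Ccont_add; [apply Ccont_const | apply Ccont_mul; auto]).
  unfold sentry.
  destruct j as [| [| [| j]]]; try destruct k as [| [| [| k]]];
    apply Ccont_div; auto; try lra;
    repeat first [apply Ccont_sub | apply Ccont_add | apply Ccont_opp | apply Ccont_mul]; auto.
Qed.

Section Derivative_of_g.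
Variables (Q dQ d2Q : R -> Cx).
Hypotheses (HQ : forall t, has_Cderiv Q t (dQ t)) (HdQ : forall t, has_Cderiv dQ t (d2Q t)).

Definition g_of (x : R) : Cx := Cdiv (dQ x) (Cmul (RtoC 8) (Cpow32 (Q x))).
Definition h_of (x : R) : Cx := Cdiv (dQ x) (Cmul (RtoC 4) (Q x)).

Definition W_of (x : R) : Cx := Cmul (RtoC 8) (Cpow32 (Q x)).
Definition dW_of (x : R) : Cx :=
  Cmul (RtoC 8) (Cadd (Cmul (dQ x) (Csqrt (Q x)))
                      (Cmul (Q x) (Cdiv (dQ x) (Cmul (RtoC 2) (Csqrt (Q x)))))).
Definition dg_of (x : R) : Cx :=
  Cadd (Cmul (d2Q x) (Cinv (W_of x)))
       (Cmul (dQ x) (Copp (Cmul (dW_of x) (Cinv (Cmul (W_of x) (W_of x)))))).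

Lemma Cnorm_W_of x : Cslit (Q x) -> Cnorm (W_of x) = 8 * Cnorm (Q x) * sqrt (Cnorm (Q x)).
Proof. intro G. unfold W_of. rewrite Cnorm_mul, Cnorm_RtoC, Cnorm_Cpow32, Rabs_pos_eq; auto; lra. Qed.

Lemma W_of_pos x : Cslit (Q x) -> 0 < Cnorm (W_of x).
Proof.
  intro G. pose proof (Cslit_norm_pos _ G). pose proof (sqrt_lt_R0 _ H).
  rewrite Cnorm_W_of by auto. apply Rmult_lt_0_compat; lra.
Qed.

Lemma Cderiv_W_of x : Cslit (Q x) -> has_Cderiv W_of x (dW_of x).
Proof.
  intro G. destruct (Cslit_nbhd Q x (dQ x) (HQ x) G) as [d [Hd0 Hd1]].
  eapply Cderiv_eq.
  - apply (Cderiv_mul (fun _ => RtoC 8)); [apply Cderiv_const |].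
    eapply Cderiv_local_ext with (a := x - d) (b := x + d); [lra | |].
    + intros t Ht. symmetry. apply Cpow32_slit, Hd1; auto.
    + exact (Cderiv_mul _ _ _ _ _ (HQ x) (Cderiv_Csqrt Q x _ (HQ x) G)).
  - unfold dW_of, Cadd, Cmul; apply Cx_eq; cbn [fst snd]; ring.
Qed.

Lemma Cderiv_g_of x : Cslit (Q x) -> has_Cderiv g_of x (dg_of x).
Proof.
  intro G. apply (Cderiv_mul dQ (fun t => Cinv (W_of t))); [apply HdQ |].
  apply Cderiv_inv; [apply Cderiv_W_of | apply W_of_pos]; auto.
Qed.

Lemma g_of_cont x : Cslit (Q x) -> Ccont g_of x.
Proof. intro G. eapply Ccont_of_Cderiv, Cderiv_g_of; auto. Qed.

Lemma h_of_cont x : Cslit (Q x) -> Ccont h_of x.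
Proof.
  intro G. pose proof (Cslit_norm_pos _ G). unfold h_of.
  apply Ccont_div; [eapply Ccont_of_Cderiv, HdQ | |].
  - apply Ccont_mul; [apply Ccont_const | eapply Ccont_of_Cderiv, HQ].
  - rewrite Cnorm_mul, Cnorm_RtoC, Rabs_pos_eq; lra.
Qed.

Lemma dg_of_cont x : (forall t, Ccont d2Q t) -> Cslit (Q x) -> Ccont dg_of x.
Proof.
  intros Hd2Q G. pose proof (W_of_pos x G).
  assert (CQ : Ccont Q x) by (eapply Ccont_of_Cderiv; apply HQ).
  assert (CdQ : Ccont dQ x) by (eapply Ccont_of_Cderiv; apply HdQ).
  assert (CS : Ccont (fun t => Csqrt (Q t)) x)
    by (eapply Ccont_of_Cderiv; apply Cderiv_Csqrt; auto).
  assert (CW : Ccont W_of x) by (eapply Ccont_of_Cderiv; apply Cderiv_W_of; auto).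
  assert (CdW : Ccont dW_of x).
  { unfold dW_of. apply Ccont_mul; [apply Ccont_const |].
    apply Ccont_add; apply Ccont_mul; auto. apply Ccont_div; auto.
    - apply Ccont_mul; auto. apply Ccont_const.
    - rewrite Cnorm_2Csqrt by auto. pose proof (sqrt_lt_R0 _ (Cslit_norm_pos _ G)). lra. }
  unfold dg_of. apply Ccont_add; apply Ccont_mul; auto; [apply Ccont_inv; auto |].
  apply Ccont_opp, Ccont_mul, Ccont_inv; auto; [apply Ccont_mul; auto |].
  rewrite Cnorm_mul. apply Rmult_lt_0_compat; auto.
Qed.
End Derivative_of_g.

Section Size_of_s.
Variables (Q dQ d2Q : R -> Cx) (x : R).
Hypothesis G : Cslit (Q x).
Let q := Cnorm (Q x).
Let q_pos : 0 < q := Cslit_norm_pos _ G.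
Let sqrt_q_pos : 0 < sqrt q := sqrt_lt_R0 _ q_pos.
Let sqrt_q_sq : sqrt q * sqrt q = q := sqrt_sqrt _ (Rlt_le _ _ q_pos).

Lemma Cnorm_g_of : Cnorm (g_of Q dQ x) = Cnorm (dQ x) / q / 8 / sqrt q.
Proof.
  unfold g_of. fold (W_of Q x). rewrite Cnorm_div, Cnorm_W_of by (auto; apply W_of_pos; auto).
  fold q. field. lra.
Qed.

Lemma Cnorm_h_of : Cnorm (h_of Q dQ x) = Cnorm (dQ x) / q / 4.
Proof.
  unfold h_of. rewrite Cnorm_div; rewrite Cnorm_mul, Cnorm_RtoC, Rabs_pos_eq by lra;
    fold q; [field |]; lra.
Qed.

Lemma dg_of_bound :
  Cnorm (dg_of Q dQ d2Q x) <= (Cnorm (d2Q x) / q / 8 + 3 / 16 * (Cnorm (dQ x) / q) ^ 2) / sqrt q.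
Proof.
  pose proof (W_of_pos Q x G) as HW. pose proof (Cnorm_W_of Q x G) as EW. fold q in EW.
  set (n1 := Cnorm (dQ x)). assert (0 <= n1) by apply Cnorm_ge0.
  assert (HdW : Cnorm (dW_of Q dQ x) <= 12 * n1 * sqrt q).
  { unfold dW_of. rewrite Cnorm_mul, Cnorm_RtoC, Rabs_pos_eq by lra.
    eapply Rle_trans; [apply Rmult_le_compat_l; [lra | apply Cnorm_add] |].
    rewrite !Cnorm_mul, Cnorm_div by (rewrite Cnorm_2Csqrt; fold q; auto; lra).
    rewrite Cnorm_Csqrt, Cnorm_2Csqrt by auto. fold q n1. right. rewrite <- sqrt_q_sq at 2. field. lra. }
  unfold dg_of. eapply Rle_trans; [apply Cnorm_add |].
  rewrite !Cnorm_mul, Cnorm_opp, Cnorm_mul, !Cnorm_inv, Cnorm_mul, EW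
    by (try rewrite Cnorm_mul; try apply Rmult_lt_0_compat; auto).
  fold n1.
  assert (n1 * (Cnorm (dW_of Q dQ x) * / (8 * q * sqrt q * (8 * q * sqrt q)))
          <= n1 * (12 * n1 * sqrt q * / (8 * q * sqrt q * (8 * q * sqrt q)))).
  { apply Rmult_le_compat_l; auto. apply Rmult_le_compat_r; auto.
    left; apply Rinv_0_lt_compat. apply Rmult_lt_0_compat; apply Rmult_lt_0_compat; nra. }
  assert (E : Cnorm (d2Q x) * / (8 * q * sqrt q) + n1 * (12 * n1 * sqrt q * / (8 * q * sqrt q * (8 * q * sqrt q)))
              = (Cnorm (d2Q x) / q / 8 + 3 / 16 * (n1 / q) ^ 2) / sqrt q) by (field; lra).
  lra.
Qed.

Lemma s_of_bound j k : (j = 1 \/ j = 2)%nat -> (k = 1 \/ k = 2)%nat ->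
  Cnorm (g_of Q dQ x) <= 1 / 2 ->
  Cnorm (sentry (g_of Q dQ x) (h_of Q dQ x) (dg_of Q dQ d2Q x) j k)
    <= (Cnorm (d2Q x) / q + (Cnorm (dQ x) / q) ^ 2) / sqrt q.
Proof.
  intros Hj Hk Hg. eapply Rle_trans; [apply sentry_bound; auto |].
  pose proof dg_of_bound. rewrite Cnorm_g_of, Cnorm_h_of.
  set (r1 := Cnorm (dQ x) / q) in *. set (r2 := Cnorm (d2Q x) / q) in *.
  assert (Hinv : 0 < / sqrt q) by (apply Rinv_0_lt_compat; lra).
  assert (0 <= r2 / sqrt q).
  { apply Rmult_le_pos; [| lra]. apply Rmult_le_pos; [apply Cnorm_ge0 |].
    left; apply Rinv_0_lt_compat; lra. }
  assert (0 <= r1 ^ 2 / sqrt q) by (apply Rmult_le_pos; [apply pow2_ge_0 | lra]).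
  apply Rle_trans with (4 / 3 * (r1 / 4 * (r1 / 8 / sqrt q) + (r2 / 8 + 3 / 16 * r1 ^ 2) / sqrt q));
    [lra |].
  assert (E1 : 4 / 3 * (r1 / 4 * (r1 / 8 / sqrt q) + (r2 / 8 + 3 / 16 * r1 ^ 2) / sqrt q)
               = 1 / 6 * (r2 / sqrt q) + 7 / 24 * (r1 ^ 2 / sqrt q)) by (field; lra).
  assert (E2 : (r2 + r1 ^ 2) / sqrt q = r2 / sqrt q + r1 ^ 2 / sqrt q) by (field; lra).
  lra.
Qed.
End Size_of_s.

Lemma Rmax_pow_lb x X n : 0 <= x -> 0 <= X -> Rmax x X ^ n <= x ^ n + X ^ n.
Proof.
  intros Hx HX. pose proof (pow_le x n Hx). pose proof (pow_le X n HX).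
  unfold Rmax. destruct (Rle_dec x X); lra.
Qed.

Lemma ratio_decay (x X kap q n C : R) (j p : nat) : 0 <= x -> 1 <= X -> 0 < kap -> 0 <= C ->
  kap * (x ^ (j + p) + X ^ (j + p)) <= q -> n <= C * (1 + x) ^ j ->
  n / q <= C * 2 ^ j / kap / Rmax x X ^ p.
Proof.
  intros Hx HX Hk HC Hq Hn. pose proof (Rmax_l x X) as Hxnu. pose proof (Rmax_r x X).
  set (nu := Rmax x X) in *.
  assert (Hnu : 1 <= nu) by lra.
  pose proof (pow_lt nu j ltac:(lra)). pose proof (pow_lt nu p ltac:(lra)).
  pose proof (pow_lt 2 j ltac:(lra)).
  assert (H1x : (1 + x) ^ j <= 2 ^ j * nu ^ j).
  { rewrite <- Rpow_mult_distr. apply pow_incr. split; lra. }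
  assert (Hqnu : kap * (nu ^ j * nu ^ p) <= q).
  { rewrite <- pow_add. eapply Rle_trans; [| exact Hq].
    apply Rmult_le_compat_l; [lra | apply Rmax_pow_lb; lra]. }
  assert (Hden : 0 < kap * (nu ^ j * nu ^ p)) by (repeat apply Rmult_lt_0_compat; auto).
  apply Rle_trans with (C * (2 ^ j * nu ^ j) / q).
  { apply Rmult_le_compat_r; [left; apply Rinv_0_lt_compat; lra |].
    eapply Rle_trans; [exact Hn | apply Rmult_le_compat_l; auto]. }
  apply Rle_trans with (C * (2 ^ j * nu ^ j) / (kap * (nu ^ j * nu ^ p))).
  { apply Rmult_le_compat_l; [apply Rmult_le_pos; [auto | nra] |].
    apply Rinv_le_contravar; auto. }
  right. field. lra.
Qed.

Lemma decay_sum_bound (x X A B r1 r2 : R) : 0 <= x -> 1 <= X -> 0 <= A -> 0 <= B ->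
  0 <= r1 <= A / Rmax x X -> r2 <= B / Rmax x X ^ 2 ->
  r2 + r1 ^ 2 <= 2 * (B + A ^ 2) / (X * X + x * x).
Proof.
  intros Hx HX HA HB Hr1 Hr2. pose proof (Rmax_l x X). pose proof (Rmax_r x X).
  set (nu := Rmax x X) in *.
  assert (HW : X * X + x * x <= 2 * nu ^ 2) by (simpl; nra).
  assert (0 < X * X + x * x) by nra.
  assert (Hr1sq : r1 ^ 2 <= A ^ 2 / nu ^ 2).
  { replace (A ^ 2 / nu ^ 2) with ((A / nu) ^ 2) by (field; lra). apply pow_incr; lra. }
  apply Rle_trans with ((B + A ^ 2) / nu ^ 2).
  { replace ((B + A ^ 2) / nu ^ 2) with (B / nu ^ 2 + A ^ 2 / nu ^ 2) by (field; lra). lra. }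
  apply Rle_trans with ((B + A ^ 2) / ((X * X + x * x) / 2)); [| right; field; lra].
  apply Rmult_le_compat_l; [pose proof (pow2_ge_0 A); lra |].
  apply Rinv_le_contravar; lra.
Qed.

Lemma dlim_scaled_atan (C X x : R) : 0 < X ->
  derivable_pt_lim (fun t => C * (atan (t / X) / X)) x (C / (X * X + x * x)).
Proof.
  intro HX.
  assert (Hlin : derivable_pt_lim (fun t => t / X) x (/ X)).
  { eapply dlim_eq.
    - apply (dlim_div (fun t => t) (fun _ => X)); [apply derivable_pt_lim_id | apply dlim_const | lra].
    - field. lra. }
  assert (Hatan : derivable_pt_lim (fun t => atan (t / X)) x (/ (1 + (x / X) ^ 2) * / X)).
  { apply (derivable_pt_lim_comp (fun t => t / X) atan); auto. apply derivable_pt_lim_atan. }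
  eapply dlim_eq.
  - apply (dlim_mult (fun _ => C)); [apply dlim_const |].
    apply (dlim_div _ (fun _ => X)); [exact Hatan | apply dlim_const | lra].
  - simpl. field. repeat split; intro; nra.
Qed.

(* [t |-> C atan (t / X) / X] is an antiderivative of [C / (X^2 + t^2)]. *)
Lemma RiemannInt_le_Cauchy_kernel (f : R -> R) (C X b : R) (pr : Riemann_integrable f 0 b) :
  0 < X -> 0 <= b -> 0 <= C -> (forall x, 0 < x < b -> f x <= C / (X * X + x * x)) ->
  RiemannInt pr <= C * (PI / 2) / X.
Proof.
  intros HX Hb HC Hf.
  set (F := fun t => C * (atan (t / X) / X)).
  set (dF := fun x => exist (fun l => derivable_pt_abs F x l) (C / (X * X + x * x))
                            (dlim_scaled_atan C X x HX) : derivable_pt F x).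
  assert (Hc : continuity (derive F dF)).
  { intro x. unfold derive, derive_pt, dF. simpl.
    apply cpt_div; [apply cpt_const | | nra].
    apply cpt_plus; [apply cpt_const |].
    apply cpt_mult; apply derivable_continuous_pt, derivable_id. }
  pose proof (RiemannInt_P32 (mkC1 Hc) 0 b) as prF.
  assert (Hle : RiemannInt pr <= RiemannInt prF) by (apply RiemannInt_P19; auto).
  rewrite (FTC_Riemann (mkC1 Hc) prF) in Hle. simpl in Hle. unfold F in Hle.
  replace (0 / X) with 0 in Hle by (field; lra). rewrite atan_0 in Hle.
  pose proof (atan_bound (b / X)).
  assert (C * (atan (b / X) / X) <= C * (PI / 2) / X).
  { replace (C * (PI / 2) / X) with (C * (PI / 2 / X)) by (field; lra).
    apply Rmult_le_compat_l; auto.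
    apply Rmult_le_compat_r; [left; apply Rinv_0_lt_compat; auto | lra]. }
  lra.
Qed.

Section Decay_of_s.
Variables (Q dQ d2Q : R -> Cx) (m : nat) (kap A B X x : R).
Hypotheses (Hm : (2 <= m)%nat) (Hx : 0 <= x) (HX : 1 <= X) (Hkap : 0 < kap)
  (HA : 0 <= A) (HB : 0 <= B) (G : Cslit (Q x))
  (HQ : kap * (x ^ m + X ^ m) <= Cnorm (Q x))
  (HdQ : Cnorm (dQ x) <= A * (1 + x) ^ (m - 1))
  (Hd2Q : Cnorm (d2Q x) <= B * (1 + x) ^ (m - 2)).
Let q := Cnorm (Q x).
Let A' := A * 2 ^ (m - 1) / kap.
Let B' := B * 2 ^ (m - 2) / kap.
Let q_pos : 0 < q := Cslit_norm_pos _ G.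

Let A'_nonneg : 0 <= A'.
Proof.
  apply Rmult_le_pos; [apply Rmult_le_pos; [lra | apply pow_le; lra] |].
  left; apply Rinv_0_lt_compat; lra.
Qed.

Let B'_nonneg : 0 <= B'.
Proof.
  apply Rmult_le_pos; [apply Rmult_le_pos; [lra | apply pow_le; lra] |].
  left; apply Rinv_0_lt_compat; lra.
Qed.

Let dQ_ratio : 0 <= Cnorm (dQ x) / q <= A' / Rmax x X.
Proof.
  split; [apply Rmult_le_pos; [apply Cnorm_ge0 | left; apply Rinv_0_lt_compat; lra] |].
  rewrite <- (pow_1 (Rmax x X)). apply ratio_decay; auto.
  replace (m - 1 + 1)%nat with m by lia. auto.
Qed.

Let d2Q_ratio : Cnorm (d2Q x) / q <= B' / Rmax x X ^ 2.
Proof. apply ratio_decay; auto. replace (m - 2 + 2)%nat with m by lia. auto. Qed.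

Let sqrt_q_lb : 0 < sqrt (kap * X ^ m) <= sqrt q.
Proof.
  pose proof (pow_le x m Hx). pose proof (pow_lt X m ltac:(lra)).
  split; [apply sqrt_lt_R0, Rmult_lt_0_compat; lra | apply sqrt_le_1_alt; unfold q; nra].
Qed.

Lemma g_of_small : A' ^ 2 <= 16 * (kap * X ^ m) -> Cnorm (g_of Q dQ x) <= 1 / 2.
Proof.
  intro Hsmall. rewrite Cnorm_g_of by auto. fold q.
  destruct sqrt_q_lb as [Hs0 Hsq]. pose proof dQ_ratio. pose proof (Rmax_r x X).
  assert (A' <= 4 * sqrt (kap * X ^ m)).
  { apply Rsqr_incr_0_var; [unfold Rsqr | lra].
    replace (4 * sqrt (kap * X ^ m) * (4 * sqrt (kap * X ^ m)))
      with (16 * (sqrt (kap * X ^ m) * sqrt (kap * X ^ m))) by ring.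
    rewrite sqrt_sqrt by (pose proof (pow_le X m ltac:(lra)); nra). simpl in Hsmall. lra. }
  assert (A' / Rmax x X <= A').
  { apply Rmult_le_reg_r with (Rmax x X); [lra |].
    replace (A' / Rmax x X * Rmax x X) with A' by (field; lra). nra. }
  apply Rmult_le_reg_r with (8 * sqrt q); [lra |].
  replace (Cnorm (dQ x) / q / 8 / sqrt q * (8 * sqrt q)) with (Cnorm (dQ x) / q)
    by (field; repeat split; lra).
  lra.
Qed.

Lemma s_of_decay (j k : nat) : (j = 1 \/ j = 2)%nat -> (k = 1 \/ k = 2)%nat ->
  Cnorm (g_of Q dQ x) <= 1 / 2 ->
  Cnorm (sentry (g_of Q dQ x) (h_of Q dQ x) (dg_of Q dQ d2Q x) j k)
    <= 2 * (B' + A' ^ 2) / sqrt (kap * X ^ m) / (X * X + x * x).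
Proof.
  intros Hj Hk Hg. eapply Rle_trans; [apply s_of_bound; auto |]. fold q.
  destruct sqrt_q_lb as [Hs0 Hsq].
  pose proof (decay_sum_bound x X A' B' _ _ Hx HX A'_nonneg B'_nonneg dQ_ratio d2Q_ratio).
  set (W := X * X + x * x) in *. assert (0 < W) by (unfold W; nra).
  assert (0 <= 2 * (B' + A' ^ 2) / W)
    by (apply Rmult_le_pos; [nra | left; apply Rinv_0_lt_compat; lra]).
  replace (2 * (B' + A' ^ 2) / sqrt (kap * X ^ m) / W)
    with (2 * (B' + A' ^ 2) / W / sqrt (kap * X ^ m)) by (field; lra).
  apply Rle_trans with (2 * (B' + A' ^ 2) / W / sqrt q).
  - apply Rmult_le_compat_r; [left; apply Rinv_0_lt_compat; lra | auto].
  - apply Rmult_le_compat_l; auto. apply Rinv_le_contravar; lra.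
Qed.
End Decay_of_s.

Lemma Rpower_inv_nat_pow (L : R) (m : nat) : 0 < L -> (1 <= m)%nat ->
  Rpower L (1 / INR m) ^ m = L.
Proof.
  intros HL Hm. assert (0 < INR m) by (apply lt_0_INR; lia).
  rewrite <- Rpower_pow by (unfold Rpower; apply exp_pos).
  rewrite Rpower_mult. replace (1 / INR m * INR m) with 1 by (field; lra). apply Rpower_1; auto.
Qed.

Lemma Rpower_ge1 (L y : R) : 1 <= L -> 0 <= y -> 1 <= Rpower L y.
Proof. intros HL Hy. rewrite <- (Rpower_O L) by lra. apply Rle_Rpower; auto. Qed.

Section Integral_of_s.
Variables (m : nat) (a : nat -> Cx) (lam : Cx) (kap A B : R).
Hypotheses (Hm : (2 <= m)%nat) (Hkap : 0 < kap) (HA : 0 <= A) (HB : 0 <= B)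
  (HL : 1 <= Cnorm lam) (Hsmall : (A * 2 ^ (m - 1) / kap) ^ 2 / (16 * kap) <= Cnorm lam)
  (HQ : forall x, 0 <= x ->
     Cslit (Qfun m a lam x) /\ kap * (x ^ m + Cnorm lam) <= Cnorm (Qfun m a lam x))
  (HdQ : forall x, 0 <= x -> Cnorm (dQfun m a x) <= A * (1 + x) ^ (m - 1))
  (Hd2Q : forall x, 0 <= x -> Cnorm (d2Qfun m a x) <= B * (1 + x) ^ (m - 2)).
Let L := Cnorm lam.
Let X := Rpower L (1 / INR m).
Let K := 2 * (B * 2 ^ (m - 2) / kap + (A * 2 ^ (m - 1) / kap) ^ 2) / sqrt kap.
Let s_of (j k : nat) (x : R) : Cx :=
  sentry (g_of (Qfun m a lam) (dQfun m a) x) (h_of (Qfun m a lam) (dQfun m a) x)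
         (dg_of (Qfun m a lam) (dQfun m a) (d2Qfun m a) x) j k.

Let X_pow : X ^ m = L.
Proof. apply Rpower_inv_nat_pow; [unfold L; lra | lia]. Qed.

Let X_ge1 : 1 <= X.
Proof.
  apply Rpower_ge1; [auto |].
  apply Rmult_le_pos; [lra | left; apply Rinv_0_lt_compat, lt_0_INR; lia].
Qed.

Let sfun_eq_s_of dg : (forall x, 0 <= x -> has_Cderiv (gfun m a lam) x (dg x)) ->
  forall j k x, 0 <= x -> sfun m a lam dg j k x = s_of j k x.
Proof.
  intros Hdg j k x Hx. change (sentry (gfun m a lam x) (hfun m a lam x) (dg x) j k = s_of j k x).
  unfold s_of. f_equal. eapply Cderiv_unique; [apply Hdg; auto |].
  apply Cderiv_g_of; [apply Qfun_deriv | apply dQfun_deriv | apply HQ; auto].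
Qed.

Let s_of_pointwise j k x : (j = 1 \/ j = 2)%nat -> (k = 1 \/ k = 2)%nat -> 0 <= x ->
  Cnorm (g_of (Qfun m a lam) (dQfun m a) x) <= 1 / 2 /\
  Cnorm (s_of j k x) <= K / sqrt L / (X * X + x * x).
Proof.
  intros Hj Hk Hx. destruct (HQ x Hx) as [G Hlb]. fold L in Hlb. rewrite <- X_pow in Hlb.
  assert (Hsq : (A * 2 ^ (m - 1) / kap) ^ 2 <= 16 * (kap * X ^ m)).
  { rewrite X_pow. apply Rmult_le_reg_r with (/ (16 * kap)); [apply Rinv_0_lt_compat; lra |].
    replace (16 * (kap * L) * / (16 * kap)) with L by (field; lra). exact Hsmall. }
  assert (Hg := g_of_small _ _ m kap A X x Hm Hx X_ge1 Hkap HA G Hlb (HdQ x Hx) Hsq).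
  split; auto.
  replace (K / sqrt L) with (2 * (B * 2 ^ (m - 2) / kap + (A * 2 ^ (m - 1) / kap) ^ 2)
                             / sqrt (kap * X ^ m)).
  - apply s_of_decay; auto.
  - pose proof (sqrt_lt_R0 kap Hkap). pose proof (sqrt_lt_R0 L ltac:(unfold L; lra)).
    unfold K. rewrite X_pow, sqrt_mult by (unfold L; lra). field. lra.
Qed.

Let s_of_cont j k x : (j = 1 \/ j = 2)%nat -> (k = 1 \/ k = 2)%nat -> 0 <= x ->
  continuity_pt (fun t => Cnorm (s_of j k t)) x.
Proof.
  intros Hj Hk Hx. destruct (HQ x Hx) as [G _].
  pose proof (Qfun_deriv m a lam) as HQd. pose proof (dQfun_deriv m a) as HdQd.
  apply Ccont_norm, sentry_cont.
  - apply (g_of_cont _ _ _ HQd HdQd x G).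
  - apply (h_of_cont _ _ _ HQd HdQd x G).
  - apply (dg_of_cont _ _ _ HQd HdQd x (d2Qfun_cont m a) G).
  - apply (proj1 (s_of_pointwise j k x Hj Hk Hx)).
Qed.

Lemma sfun_integral_bound (dg : R -> Cx) :
  (forall x, 0 <= x -> has_Cderiv (gfun m a lam) x (dg x)) ->
  forall j k : nat, (j = 1 \/ j = 2)%nat -> (k = 1 \/ k = 2)%nat -> forall b, 0 <= b ->
  exists pr : Riemann_integrable (fun x => Cnorm (sfun m a lam dg j k x)) 0 b,
    RiemannInt pr <= K * (PI / 2) * Rpower L (- (1 / 2 + 1 / INR m)).
Proof.
  intros Hdg j k Hj Hk b Hb.
  assert (pr : Riemann_integrable (fun x => Cnorm (sfun m a lam dg j k x)) 0 b).
  { refine (@Riemann_integrable_ext (fun t => Cnorm (s_of j k t)) _ 0 b _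
              (continuity_implies_RiemannInt Hb (fun x Hx => s_of_cont j k x Hj Hk (proj1 Hx)))).
    intros x Hx. rewrite Rmin_left, Rmax_right in Hx by lra.
    rewrite sfun_eq_s_of by (auto; lra). reflexivity. }
  exists pr.
  assert (HK : 0 <= K / sqrt L).
  { pose proof (sqrt_lt_R0 kap Hkap). pose proof (sqrt_lt_R0 L ltac:(unfold L; lra)).
    pose proof (pow2_ge_0 (A * 2 ^ (m - 1) / kap)).
    assert (0 <= B * 2 ^ (m - 2) / kap)
      by (apply Rmult_le_pos; [apply Rmult_le_pos; [lra | apply pow_le; lra]
                              | left; apply Rinv_0_lt_compat; lra]).
    unfold K; repeat apply Rmult_le_pos; try lra; left; apply Rinv_0_lt_compat; lra. }
  eapply Rle_trans.
  - apply (RiemannInt_le_Cauchy_kernel _ (K / sqrt L) X b pr); auto; [lra |].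
    intros x Hx. rewrite sfun_eq_s_of by (auto; lra).
    apply (proj2 (s_of_pointwise j k x Hj Hk ltac:(lra))).
  - right. rewrite Rpower_Ropp, Rpower_plus.
    replace (1 / 2) with (/ 2) by field. rewrite Rpower_sqrt by (unfold L; lra). fold X.
    field. split; [lra | apply Rgt_not_eq, sqrt_lt_R0; unfold L; lra].
Qed.
End Integral_of_s.

Lemma angle_lt_PI2 (m : nat) (delta : R) :
  (1 <= m)%nat -> 0 < delta -> delta <= PI / (INR m + 2) -> 0 < delta < PI / 2.
Proof.
  intros Hm Hd0 Hd1. pose proof PI_RGT_0. pose proof (lt_0_INR m ltac:(lia)).
  split; auto. eapply Rle_lt_trans; [exact Hd1 |].
  apply Rmult_lt_compat_l; [lra |]. apply Rinv_lt_contravar; [apply Rmult_lt_0_compat |]; lra.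
Qed.

Theorem mainTheorem8 (m : nat) (hm : (3 <= m)%nat) (delta : R)
  (hd0 : 0 < delta) (hd1 : delta <= PI / (INR m + 2)) (M : R) :
  exists Cst R0 : R, 0 < R0 /\
  forall (a : nat -> Cx) (lam : Cx),
    (forall i : nat, (1 <= i <= m)%nat -> Cnorm (a i) <= M) ->
    R0 <= Cnorm lam ->
    Rabs (Carg lam) <= PI - delta ->
    (exists dg : R -> Cx, forall x, 0 <= x -> has_Cderiv (gfun m a lam) x (dg x)) /\
    (forall dg : R -> Cx, (forall x, 0 <= x -> has_Cderiv (gfun m a lam) x (dg x)) ->
     forall j k : nat, (j = 1%nat \/ j = 2%nat) -> (k = 1%nat \/ k = 2%nat) ->
     forall b : R, 0 <= b ->
     exists pr : Riemann_integrable (fun x => Cnorm (sfun m a lam dg j k x)) 0 b,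
       RiemannInt pr <= Cst * Rpower (Cnorm lam) (- (1 / 2 + 1 / INR m))).
Proof.
  pose proof (angle_lt_PI2 m delta ltac:(lia) hd0 hd1) as Hdelta.
  destruct (Qfun_sector_lb m delta M ltac:(lia) Hdelta) as [kap [R1 [Hkap [HR1 Hsector]]]].
  set (A := INR m * (1 + INR m * Rabs M)). set (B := INR m * INR m * (1 + INR m * Rabs M)).
  assert (HAB : 0 <= A /\ 0 <= B).
  { pose proof (pos_INR m). pose proof (Rabs_pos M).
    assert (0 <= 1 + INR m * Rabs M) by nra. unfold A, B. split; repeat apply Rmult_le_pos; auto. }
  set (Lsmall := (A * 2 ^ (m - 1) / kap) ^ 2 / (16 * kap)).
  exists (2 * (B * 2 ^ (m - 2) / kap + (A * 2 ^ (m - 1) / kap) ^ 2) / sqrt kap * (PI / 2)),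
         (Rmax 1 (Rmax R1 Lsmall)).
  pose proof (Rmax_l 1 (Rmax R1 Lsmall)). pose proof (Rmax_r 1 (Rmax R1 Lsmall)).
  pose proof (Rmax_l R1 Lsmall). pose proof (Rmax_r R1 Lsmall).
  split; [lra |]. intros a lam Ha HL Harg.
  assert (Ha' : forall i, (1 <= i <= m)%nat -> Cnorm (a i) <= Rabs M)
    by (intros; eapply Rle_trans; [apply Ha; auto | apply Rle_abs]).
  split.
  - exists (dg_of (Qfun m a lam) (dQfun m a) (d2Qfun m a)). intros x Hx.
    apply Cderiv_g_of; [apply Qfun_deriv | apply dQfun_deriv | apply Hsector; auto; lra].
  - apply sfun_integral_bound; try tauto; try lia; try lra.
    + fold Lsmall. lra.
    + intros x Hx. apply Hsector; auto; lra.
    + intros x Hx. apply (dQfun_bound m a _ Ha' x Hx).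
    + intros x Hx. apply (d2Qfun_bound m a _ Ha' x Hx).
Qed.
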